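(* Let $\varphi$ be an admissible order function and let $\Psi:(0,1]\to(0,\infty)$ be a function with $M_\varphi<m_\Psi$. Then there exists $C>0$ such that for every $0<r\le1$, $$\int_{\mathbb{R}^d}\frac{\Psi(|h|\wedge r)}{|h|^d\varphi(|h|)}\,dh\le C\frac{\Psi(r)}{\varphi(r)}.$$
   Context: $g:(0,1]\to(0,\infty)$ is almost increasing if $c\,g(r)\le g(R)$ for some $c\in(0,1]$ and all $0<r\le R\le1$, almost decreasing if $g(R)\le Cg(r)$ for some $C\ge1$ and all $0<r\le R\le1$. $M_g=\inf\{\alpha: g(r)/r^\alpha\text{ almost decreasing on }(0,1]\}$, $m_g=\sup\{\alpha: g(r)/r^\alpha\text{ almost increasing on }(0,1]\}$. An admissible order function is a smooth $\varphi:(0,\infty)\to(0,\infty)$, $\varphi(1)=1$, such that $\phi(r)=\varphi(r^{-1/2})^{-1}$ is a Bernstein function ($\phi\ge0$, $C^\infty$, $(-1)^n\phi^{(n)}\le0$ for $n\ge1$) and $a_1\lambda^{2\delta_1}\varphi(r)\le\varphi(\lambda r)\le a_2\lambda^{2\delta_2}\varphi(r)$ for all $\lambda\ge1,r>0$, for some $0<\delta_1\le\delta_2<1$, $a_1\in(0,1]$, $a_2\ge1$; $M_\varphi$ refers to the restriction of $\varphi$ to $(0,1]$. $|h|\wedge r=\min(|h|,r)$. *)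

From HB Require Import structures.
From mathcomp Require Import all_boot all_order all_algebra.
From mathcomp Require Import all_classical all_reals all_analysis.
Set Implicit Arguments. Unset Strict Implicit. Unset Printing Implicit Defensive.
Import Order.TTheory GRing.Theory Num.Theory.
Import numFieldNormedType.Exports.
Local Open Scope classical_set_scope.
Local Open Scope ring_scope.

Definition almost_increasing {R : realType} (g : R -> R) : Prop :=
  exists c : R, 0 < c /\ c <= 1 /\
    forall r s : R, 0 < r -> r <= s -> s <= 1 -> c * g r <= g s.

Definition almost_decreasing {R : realType} (g : R -> R) : Prop :=
  exists C : R, 1 <= C /\
    forall r s : R, 0 < r -> r <= s -> s <= 1 -> g s <= C * g r.

Definition upper_index {R : realType} (g : R -> R) : \bar R :=
  ereal_inf [set (a%:E)%E | a in
    [set a : R | almost_decreasing (fun r => g r / r `^ a)]].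

Definition lower_index {R : realType} (g : R -> R) : \bar R :=
  ereal_sup [set (a%:E)%E | a in
    [set a : R | almost_increasing (fun r => g r / r `^ a)]].

Definition nderive {R : realType} (n : nat) (f : R -> R) : R -> R :=
  iter n (fun g => derive1 g) f.

Definition smooth_pos {R : realType} (f : R -> R) : Prop :=
  forall (n : nat) (x : R), 0 < x -> derivable (nderive n f) x 1.

Definition bernstein {R : realType} (f : R -> R) : Prop :=
  (forall x : R, 0 < x -> 0 <= f x) /\ smooth_pos f /\
  (forall (n : nat) (x : R), (0 < n)%N -> 0 < x ->
     (-1) ^+ n * nderive n f x <= 0).

Definition admissible_order {R : realType} (phi : R -> R) : Prop :=
  (forall x : R, 0 < x -> 0 < phi x) /\
  smooth_pos phi /\
  phi 1 = 1 /\
  bernstein (fun r : R => (phi (r `^ (- (1 / 2))))^-1) /\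
  exists d1 d2 a1 a2 : R,
    0 < d1 /\ d1 <= d2 /\ d2 < 1 /\ 0 < a1 /\ a1 <= 1 /\ 1 <= a2 /\
    forall lam r : R, 1 <= lam -> 0 < r ->
      a1 * lam `^ (2 * d1) * phi r <= phi (lam * r) /\
      phi (lam * r) <= a2 * lam `^ (2 * d2) * phi r.

Definition enorm {R : realType} {d : nat} (h : d.-tuple R) : R :=
  Num.sqrt (\sum_(i < d) (tnth h i) ^+ 2).

(* Lebesgue integral over R^d of a function with values in \bar R,
   computed as the iterated integral dx_1 ... dx_d (Tonelli) *)
Fixpoint integral_Rd {R : realType} (d : nat) :
    (d.-tuple R -> \bar R) -> \bar R :=
  match d return (d.-tuple R -> \bar R) -> \bar R with
  | 0 => fun f => f [tuple]
  | d'.+1 => fun f =>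
      (\int[@lebesgue_measure R]_(x in [set: R])
         integral_Rd (fun t : d'.-tuple R => f (cons_tuple x t)))%E
  end.

(* Pick al < be with phi(t)/t^al almost decreasing and Psi(t)/t^be almost
   increasing on (0,1]. For s = |h| <= r they give
   Psi(s)/phi(s) <~ (Psi(r)/phi(r)) (s/r)^(be-al), and for s > r the lower scaling
   of phi gives Psi(r)/phi(s) <~ (Psi(r)/phi(r)) (s/r)^(-2 delta_1). So the
   integrand is at most C (Psi(r)/phi(r)) (r^-1 w(|h|/r))^d with
   w(u) = min(u^(e-1), u^(-1-b)) for small e, b > 0. Instead of polar
   coordinates, use |h_i| <= |h| and the monotonicity of w: the d-th power is
   bounded by a product of one-dimensional dyadic step functions S_r(h_i)
   majorizing x |-> r^-1 w(|x|/r), whose integral over R does not depend on r,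
   and Tonelli concludes. *)

From HB Require Import structures.
From mathcomp Require Import all_boot all_order all_algebra.
From mathcomp Require Import all_classical all_reals all_analysis.
From mathcomp Require Import measurable_realfun.
From mathcomp Require Import ring lra.
Set Implicit Arguments.
Unset Strict Implicit.
Unset Printing Implicit Defensive.

Import Order.TTheory GRing.Theory Num.Theory.
Import numFieldNormedType.Exports.
Local Open Scope classical_set_scope.
Local Open Scope ring_scope.

Section nonneg_integral.
Context {d : measure_display} {T : measurableType d} {R : realType}.
Variable mu : measure T R.
Local Open Scope ereal_scope.

Lemma ge0_le_integralT (f g : T -> \bar R) :
  (forall x, 0 <= f x) -> (forall x, f x <= g x) ->
  \int[mu]_x f x <= \int[mu]_x g x.
Proof.
move=> f0 fg; have g0 x : 0 <= g x by apply: le_trans (fg x).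
rewrite ge0_integralTE // ge0_integralTE //.
apply: ereal_sup_le => _ [h hf <-]; exists h => //= x.
exact: le_trans (fg x).
Qed.

End nonneg_integral.

Section integral_Rd.
Context {R : realType}.
Local Open Scope ereal_scope.

Lemma integral_Rd_ge0 n (f : n.-tuple R -> \bar R) :
  (forall t, 0 <= f t) -> 0 <= integral_Rd f.
Proof.
elim: n f => [|n IH] f f0 /=; first exact: f0.
by apply: integral_ge0 => x _; apply: IH => t.
Qed.

Lemma ge0_le_integral_Rd n (f g : n.-tuple R -> \bar R) :
  (forall t, 0 <= f t) -> (forall t, f t <= g t) ->
  integral_Rd f <= integral_Rd g.
Proof.
elim: n f g => [|n IH] f g f0 fg /=; first exact: fg.
apply: ge0_le_integralT => x; first by apply: integral_Rd_ge0 => t.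
exact: IH.
Qed.

Lemma integral_Rd_prod_le (G : R -> \bar R) (J : R) :
  (forall x, 0 <= G x) -> measurable_fun [set: R] G ->
  \int[lebesgue_measure]_x G x <= J%:E ->
  forall n (c : \bar R), 0 <= c ->
  integral_Rd (fun t : n.-tuple R => c * \prod_(i < n) G (tnth t i))
    <= c * (J ^+ n)%:E.
Proof.
move=> G0 mG GJ; have J0 : (0 <= J)%R.
  by rewrite -lee_fin; apply: le_trans GJ; exact: integral_ge0.
elim=> [|n IH] c c0; first by rewrite /= big_ord0 !mule1.
have cJ0 : 0 <= c * (J ^+ n)%:E by rewrite mule_ge0// lee_fin exprn_ge0.
apply: (@le_trans _ _ (\int[lebesgue_measure]_x (c * (J ^+ n)%:E * G x))).
  apply: ge0_le_integralT => x.
    by apply: integral_Rd_ge0 => t; rewrite mule_ge0// prode_ge0.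
  under eq_fun do rewrite big_ord_recl tnth0 muleA.
  under eq_fun do under eq_bigr do rewrite tnthS.
  by rewrite muleAC; apply: IH; rewrite mule_ge0.
rewrite ge0_integralZl// exprSr EFinM muleA.
by apply: lee_wpmul2l.
Qed.

End integral_Rd.

Section real_powers.
Context {R : realType}.

Lemma exprn_powR (a p : R) n : 0 <= a -> (a ^+ n) `^ p = (a `^ p) ^+ n.
Proof.
move=> a0; rewrite -powR_mulrn// -powRrM mulrC powRrM powR_mulrn//.
exact: powR_ge0.
Qed.

Lemma powR_lt1 (a x : R) : 0 < a < 1 -> 0 < x -> a `^ x < 1.
Proof.
move=> /andP[a0 a1] x0; rewrite /powR gt_eqF// expR_lt1.
by rewrite pmulr_rlt0// ln_lt0// a0 a1.
Qed.

Lemma powR_lt1_neg (a x : R) : 1 < a -> x < 0 -> a `^ x < 1.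
Proof.
move=> a1 x0; rewrite /powR gt_eqF ?(lt_trans ltr01)// expR_lt1.
by rewrite nmulr_rlt0// ln_gt0.
Qed.

Lemma ler_powR_npos (a c p : R) : 0 < a -> a <= c -> p <= 0 -> c `^ p <= a `^ p.
Proof.
move=> a0 ac p0; have c0 : 0 < c by apply: lt_le_trans ac.
by rewrite /powR !gt_eqF// ler_expR ler_wnM2l// ler_ln.
Qed.

Lemma exists_dyadic_bracket (v : R) : 1 <= v -> exists k, 2 ^+ k <= v <= 2 ^+ k.+1.
Proof.
move=> v1; have [n vn] : exists n, v <= 2 ^+ n.
  exists (Num.bound v); apply/ltW/(lt_trans (archi_boundP (le_trans ler01 v1))).
  by rewrite -natrX ltr_nat ltn_expl.
elim: n vn => [|n IH] vn.
  by exists 0%N; rewrite expr0 v1 expr1 (le_trans vn) ?ler1n.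
by have [/IH//|/ltW vn'] := leP v (2 ^+ n); exists n; rewrite vn' vn.
Qed.

End real_powers.

Section ereal_sums_products.
Context {R : realType}.
Local Open Scope ereal_scope.

Lemma nneseries_geometric (a z : R) : (`|z| < 1)%R ->
  \sum_(k <oo) (a * z ^+ k)%:E = (a / (1 - z))%:E.
Proof.
move=> z1; have -> : (fun n => \sum_(0 <= k < n) (a * z ^+ k)%:E) =
    EFin \o series (geometric a z).
  by apply/funext => n; rewrite /series /= sumEFin.
rewrite EFin_lim; last exact: is_cvg_geometric_series.
by congr (_%:E); apply: cvg_lim => //; exact: cvg_geometric_series.
Qed.

Lemma nneseries_term_le (u : (\bar R)^nat) k :
  (forall n, 0 <= u n) -> u k <= \sum_(n <oo) u n.
Proof.
move=> u0; apply: le_trans (nneseries_lim_ge k.+1 _); last by move=> n _ _.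
by rewrite big_nat_recr//= leeDr// sume_ge0.
Qed.

Lemma lee_prod (I : Type) (s : seq I) (P : pred I) (f g : I -> \bar R) :
  (forall i, P i -> 0 <= f i) -> (forall i, P i -> f i <= g i) ->
  \prod_(i <- s | P i) f i <= \prod_(i <- s | P i) g i.
Proof.
move=> f0 fg; suff [] : 0 <= \prod_(i <- s | P i) f i /\
    \prod_(i <- s | P i) f i <= \prod_(i <- s | P i) g i by [].
apply: (big_ind2 (fun x y => 0 <= x /\ x <= y)) => //.
- by move=> x1 x2 y1 y2 [x1_ge0 x12] [y1_ge0 y12]; rewrite mule_ge0// lee_pmul.
- by move=> i Pi; rewrite f0// fg.
Qed.

End ereal_sums_products.

Lemma tnth_le_enorm {R : realType} n (t : n.-tuple R) i : `|tnth t i| <= enorm t.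
Proof.
rewrite /enorm -sqrtr_sqr; apply: ler_wsqrtr.
by rewrite (bigD1 i)//= lerDl sumr_ge0// => j _; rewrite sqr_ge0.
Qed.

Definition centered_itv {R : realType} (a : R) : set R := `[- a, a]%classic.

Section centered_itv.
Context {R : realType}.

Lemma in_centered_itv (a x : R) : (x \in centered_itv a) = (`|x| <= a).
Proof. by rewrite /centered_itv mem_setE in_itv /= ler_norml. Qed.

Lemma lebesgue_measure_centered_itv (a : R) : 0 <= a ->
  (lebesgue_measure (centered_itv a) = (2 * a)%:E)%E.
Proof.
move=> a0; rewrite /centered_itv lebesgue_measure_itv /= lte_fin.
have [->|a_gt0] := eqVneq a 0; first by rewrite oppr0 ltxx mulr0.
by rewrite gtrN ?lt_def ?a_gt0// -EFinD opprK -mulr2n mulr_natl.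
Qed.

Lemma integral_indic_centered (c a : R) : 0 <= c -> 0 <= a ->
  (\int[lebesgue_measure]_x (c * \1_(centered_itv a) x)%:E = (c * (2 * a))%:E)%E.
Proof.
move=> c0 a0; under eq_integral do rewrite EFinM.
rewrite ge0_integralZl_EFin//; last first.
  by apply/measurable_EFinP; apply: measurable_indic; exact: measurable_itv.
rewrite integral_indic//; last exact: measurable_itv.
by rewrite setIT EFinM; congr (_ * _)%E; exact: lebesgue_measure_centered_itv.
Qed.

End centered_itv.

Definition kernel_profile {R : realType} (e b u : R) : R :=
  Num.min (u `^ (e - 1)) (u `^ (-1 - b)).

Section dyadic_majorant.
Context {R : realType}.
Variables (r e b : R).
Hypothesis r_gt0 : 0 < r.
Local Open Scope ereal_scope.

(* The k-th step is [r^-1 (|x| / r) `^ (e - 1)] evaluated at |x| = r 2^-(k+1), on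
   |x| <= r 2^-k, plus [r^-1 (|x| / r) `^ (-1 - b)] evaluated at |x| = r 2^k, on
   |x| <= r 2^(k+1). *)
Definition dyadic_step k x : \bar R :=
  (r^-1 * ((2^-1) ^+ k.+1) `^ (e - 1)
     * \1_(centered_itv (r * (2^-1) ^+ k)) x)%:E +
  (r^-1 * (2 ^+ k) `^ (-1 - b)
     * \1_(centered_itv (r * 2 ^+ k.+1)) x)%:E.

Definition dyadic_majorant x := \sum_(k <oo) dyadic_step k x.

Lemma dyadic_step_ge0 k x : 0 <= dyadic_step k x.
Proof.
have r_inv_ge0 : (0 <= r^-1)%R by rewrite invr_ge0 ltW.
by rewrite adde_ge0// lee_fin !mulr_ge0// powR_ge0.
Qed.

Lemma dyadic_majorant_ge0 x : 0 <= dyadic_majorant x.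
Proof. by apply: nneseries_ge0 => k _ _; exact: dyadic_step_ge0. Qed.

Lemma measurable_dyadic_step k : measurable_fun [set: R] (dyadic_step k).
Proof.
apply: emeasurable_funD; apply/measurable_EFinP; apply: measurable_funM => //;
  apply: measurable_indic; exact: measurable_itv.
Qed.

Lemma measurable_dyadic_majorant : measurable_fun [set: R] dyadic_majorant.
Proof.
apply: (@ge0_emeasurable_sum _ _ _ _ dyadic_step xpredT) => k *.
  exact: dyadic_step_ge0.
exact: measurable_dyadic_step.
Qed.

Lemma integral_dyadic_step k : (0 < e)%R ->
  \int[lebesgue_measure]_x dyadic_step k x =
  (4 * 2^-1 `^ e * (2^-1 `^ e) ^+ k)%:E + (4 * (2 `^ (- b)) ^+ k)%:E.
Proof.
move=> e_gt0; have r_inv_ge0 : (0 <= r^-1)%R by rewrite invr_ge0 ltW.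
rewrite ge0_integralD//; first last.
- apply/measurable_EFinP; apply: measurable_funM => //.
  by apply: measurable_indic; exact: measurable_itv.
- by move=> x _; rewrite lee_fin !mulr_ge0// powR_ge0.
- apply/measurable_EFinP; apply: measurable_funM => //.
  by apply: measurable_indic; exact: measurable_itv.
- by move=> x _; rewrite lee_fin !mulr_ge0// powR_ge0.
rewrite !integral_indic_centered ?mulr_ge0 ?exprn_ge0 ?powR_ge0 ?(ltW r_gt0)//.
congr (_%:E + _%:E).
- set X := ((2^-1) ^+ k.+1)%R.
  have -> : (2 * (r * 2^-1 ^+ k) = 4 * r * X)%R by rewrite /X exprS; field.
  have -> : (r^-1 * X `^ (e - 1) * (4 * r * X) = 4 * (X * X `^ (e - 1)))%R.
    by field; rewrite gt_eqF.
  by rewrite mulr_powRB1 ?exprn_ge0// exprn_powR// exprS mulrA.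
- set Y := (2 ^+ k)%R.
  have Y_gt0 : (0 < Y)%R by rewrite exprn_gt0.
  have -> : (2 * (r * 2 ^+ k.+1) = 4 * r * Y)%R by rewrite /Y exprS; ring.
  rewrite powRD; last by apply/implyP => _; rewrite gt_eqF.
  rewrite powR_inv1 ?ltW// /Y -exprn_powR//.
  by field; rewrite !gt_eqF.
Qed.

Lemma dyadic_step_ge_inner k x : (`|x| <= r * (2^-1) ^+ k)%R ->
  (r^-1 * ((2^-1) ^+ k.+1) `^ (e - 1))%:E <= dyadic_step k x.
Proof.
move=> xk; have r_inv_ge0 : (0 <= r^-1)%R by rewrite invr_ge0 ltW.
rewrite /dyadic_step indicE (_ : _ \in _ = true) ?in_centered_itv// mulr1.
by rewrite leeDl// lee_fin !mulr_ge0// powR_ge0.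
Qed.

Lemma dyadic_step_ge_outer k x : (`|x| <= r * 2 ^+ k.+1)%R ->
  (r^-1 * (2 ^+ k) `^ (-1 - b))%:E <= dyadic_step k x.
Proof.
move=> xk; have r_inv_ge0 : (0 <= r^-1)%R by rewrite invr_ge0 ltW.
rewrite /dyadic_step [\1_(centered_itv _) x in X in _ + X]indicE.
rewrite (_ : _ \in _ = true) ?in_centered_itv// mulr1.
by rewrite leeDr// lee_fin !mulr_ge0// powR_ge0.
Qed.

Lemma dyadic_majorant_ge (x y : R) : (e <= 1)%R -> (0 <= b)%R ->
  (0 < y)%R -> (`|x| <= y)%R ->
  (r^-1 * kernel_profile e b (y / r))%:E <= dyadic_majorant x.
Proof.
move=> e_le1 b_ge0 y_gt0 xy.
have r_inv_gt0 : (0 < r^-1)%R by rewrite invr_gt0.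
have [yr|/ltW ry] := leP y r.
- have [k /andP[lo hi]] : exists k, (2 ^+ k <= r / y <= 2 ^+ k.+1)%R.
    by apply: exists_dyadic_bracket; rewrite ler_pdivlMr// mul1r.
  have x_in : (`|x| <= r * (2^-1) ^+ k)%R.
    rewrite (le_trans xy)// exprVn ler_pdivlMr ?exprn_gt0//.
    by rewrite -ler_pdivlMl// mulrC.
  apply: (le_trans _ (le_trans (dyadic_step_ge_inner x_in)
    (nneseries_term_le k (dyadic_step_ge0^~ x)))).
  rewrite lee_fin ler_pM2l// ge_min; apply/orP; left.
  apply: ler_powR_npos; [by rewrite exprn_gt0 ?invr_gt0| |by rewrite subr_le0].
  by rewrite exprVn -invf_div lef_pV2 ?posrE ?exprn_gt0 ?divr_gt0.
- have [k /andP[lo hi]] : exists k, (2 ^+ k <= y / r <= 2 ^+ k.+1)%R.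
    by apply: exists_dyadic_bracket; rewrite ler_pdivlMr// mul1r.
  have x_in : (`|x| <= r * 2 ^+ k.+1)%R.
    by rewrite (le_trans xy)// mulrC -ler_pdivrMr.
  apply: (le_trans _ (le_trans (dyadic_step_ge_outer x_in)
    (nneseries_term_le k (dyadic_step_ge0^~ x)))).
  rewrite lee_fin ler_pM2l// ge_min; apply/orP; right.
  by apply: ler_powR_npos; rewrite ?exprn_gt0//; lra.
Qed.

End dyadic_majorant.

Lemma integral_dyadic_majorant {R : realType} (e b : R) : 0 < e -> 0 < b ->
  exists2 J : R, 0 < J & forall r, 0 < r ->
    (\int[lebesgue_measure]_x dyadic_majorant r e b x = J%:E)%E.
Proof.
move=> e_gt0 b_gt0.
have rho_lt1 : `|2^-1 `^ e| < 1 :> R.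
  by rewrite ger0_norm ?powR_ge0// powR_lt1// invr_gt0 invf_lt1 ltr0n ?ltr1n.
have sigma_lt1 : `|2 `^ (- b)| < 1 :> R.
  by rewrite ger0_norm ?powR_ge0// powR_lt1_neg ?ltr1n// oppr_lt0.
exists (4 * 2^-1 `^ e / (1 - 2^-1 `^ e) + 4 / (1 - 2 `^ (- b))).
  rewrite addr_gt0 ?divr_gt0 ?mulr_gt0 ?powR_gt0 ?subr_gt0//.
  - by rewrite (le_lt_trans (ler_norm _)).
  - by rewrite (le_lt_trans (ler_norm _)).
move=> r r_gt0; rewrite integral_nneseries//; last 2 first.
- by move=> k; exact: measurable_dyadic_step.
- by move=> k x _; exact: dyadic_step_ge0.
rewrite (eq_eseriesr (fun k _ => integral_dyadic_step b r_gt0 k e_gt0)).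
rewrite nneseriesD => [|k _ _|k _ _]; last 2 first.
- by rewrite lee_fin !mulr_ge0 ?exprn_ge0 ?powR_ge0.
- by rewrite lee_fin mulr_ge0 ?exprn_ge0 ?powR_ge0.
by rewrite !nneseries_geometric// -EFinD.
Qed.

Section almost_monotone.
Context {R : realType}.

Lemma eq_almost_increasing (f g : R -> R) :
  (forall t, 0 < t -> t <= 1 -> f t = g t) ->
  almost_increasing f -> almost_increasing g.
Proof.
move=> fg [c [c_gt0 [c_le1 f_inc]]]; exists c; do 2!split=> //.
move=> r s r_gt0 rs s_le1.
have s_gt0 := lt_le_trans r_gt0 rs.
by rewrite -!fg ?(le_trans rs)//; exact: f_inc.
Qed.

Lemma almost_increasing_div (f g : R -> R) :
  (forall t, 0 < t -> t <= 1 -> 0 <= f t) ->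
  (forall t, 0 < t -> t <= 1 -> 0 < g t) ->
  almost_increasing f -> almost_decreasing g ->
  almost_increasing (fun t => f t / g t).
Proof.
move=> f_ge0 g_gt0 [c [c_gt0 [c_le1 f_inc]]] [C [C_ge1 g_dec]].
have C_gt0 : 0 < C by apply: lt_le_trans C_ge1.
exists (c / C); split; first by rewrite divr_gt0.
split; first by rewrite ler_pdivrMr// mul1r (le_trans c_le1).
move=> r s r_gt0 rs s_le1; have s_gt0 := lt_le_trans r_gt0 rs.
have gr_gt0 := g_gt0 r r_gt0 (le_trans rs s_le1).
have gs_gt0 := g_gt0 s s_gt0 s_le1.
rewrite ler_pdivlMr//; apply: le_trans (f_inc r s r_gt0 rs s_le1).
have -> : c * f r = c / C * (f r / g r) * (C * g r) by field; rewrite !gt_eqF.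
rewrite ler_wpM2l ?g_dec// !mulr_ge0 ?invr_ge0 ?f_ge0 ?(le_trans rs)// ltW//.
Qed.

Lemma almost_increasing_powR_ratio (h : R -> R) (p : R) :
  almost_increasing (fun t => h t / t `^ p) ->
  exists K, 0 < K /\ forall s r, 0 < s -> s <= r -> r <= 1 ->
    h s <= K * h r * (s / r) `^ p.
Proof.
move=> [c [c_gt0 [_ h_inc]]]; exists c^-1; split; first by rewrite invr_gt0.
move=> s r s_gt0 sr r_le1; have r_gt0 := lt_le_trans s_gt0 sr.
have spr : s `^ p = (s / r) `^ p * r `^ p.
  by rewrite -powRM ?divr_ge0 ?ltW// divfK ?gt_eqF.
have := h_inc s r s_gt0 sr r_le1.
rewrite -ler_pdivlMl// ler_pdivrMr ?powR_gt0// => /le_trans; apply.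
rewrite spr (_ : _ * (_ * _) = c^-1 * h r * (s / r) `^ p)//.
by field; rewrite !gt_eqF ?powR_gt0.
Qed.

End almost_monotone.

Section indices.
Context {R : realType}.

Lemma upper_lower_index_gap (phi Psi : R -> R) :
  (upper_index phi < lower_index Psi)%E ->
  exists al be : R, al < be /\
    almost_decreasing (fun t => phi t / t `^ al) /\
    almost_increasing (fun t => Psi t / t `^ be).
Proof.
move=> gap; have [_ [al phi_dec <-] al_lt] := ereal_inf_lt gap.
have [_ [be Psi_inc <-]] := ereal_sup_gt al_lt.
by rewrite lte_fin => al_be; exists al, be.
Qed.

Lemma index_gap_ratio (phi Psi : R -> R) (al be : R) :
  (forall t, 0 < t -> t <= 1 -> 0 < phi t) ->
  (forall t, 0 < t -> t <= 1 -> 0 < Psi t) ->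
  almost_decreasing (fun t => phi t / t `^ al) ->
  almost_increasing (fun t => Psi t / t `^ be) ->
  exists K, 0 < K /\ forall s r, 0 < s -> s <= r -> r <= 1 ->
    Psi s / phi s <= K * (Psi r / phi r) * (s / r) `^ (be - al).
Proof.
move=> phi_gt0 Psi_gt0 phi_dec Psi_inc.
apply: (@almost_increasing_powR_ratio _ (fun t => Psi t / phi t)).
apply: (eq_almost_increasing _ (almost_increasing_div _ _ Psi_inc phi_dec)).
- move=> t t_gt0 t_le1; rewrite powRB; last by apply/implyP => _; rewrite gt_eqF.
  by field; rewrite !gt_eqF ?powR_gt0 ?phi_gt0.
- by move=> t t_gt0 t_le1; rewrite divr_ge0 ?powR_ge0 ?ltW ?Psi_gt0.
- by move=> t t_gt0 t_le1; rewrite divr_gt0 ?powR_gt0 ?phi_gt0.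
Qed.

Lemma admissible_order_gt0 (phi : R -> R) :
  admissible_order phi -> forall t, 0 < t -> 0 < phi t.
Proof. by case. Qed.

Lemma admissible_order_lower_scaling (phi : R -> R) :
  admissible_order phi -> exists c delta, 0 < c /\ 0 < delta /\
    forall r s, 0 < r -> r <= s -> c * (s / r) `^ delta * phi r <= phi s.
Proof.
case=> _ [_ [_ [_ [d1 [d2 [a1 [a2 [d1_gt0 [_ [_ [a1_gt0 [_ [_ scale]]]]]]]]]]]]].
exists a1, (2 * d1); split=> //; split; first by rewrite mulr_gt0.
move=> r s r_gt0 rs; have lam_ge1 : 1 <= s / r by rewrite ler_pdivlMr// mul1r.
by have [+ _] := scale (s / r) r lam_ge1 r_gt0; rewrite divfK ?gt_eqF.
Qed.

End indices.

Section kernel_profile.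
Context {R : realType}.

Lemma kernel_profile_le1 (e b u : R) : 0 < u <= 1 -> - b <= e ->
  kernel_profile e b u = u `^ (e - 1).
Proof. by move=> u01 be; rewrite /kernel_profile min_l// ger_powR//; lra. Qed.

Lemma kernel_profile_ge1 (e b u : R) : 1 <= u -> - b <= e ->
  kernel_profile e b u = u `^ (-1 - b).
Proof. by move=> u1 be; rewrite /kernel_profile min_r// ler_powR//; lra. Qed.

Lemma scaled_powR_exprn (r s p : R) n : 0 < r -> 0 < s ->
  (r^-1 * (s / r) `^ (p - 1)) ^+ n = (s / r) `^ (p * n%:R) / s ^+ n.
Proof.
move=> r_gt0 s_gt0; have u_gt0 : 0 < s / r by rewrite divr_gt0.
rewrite powRB ?powRr1 ?ltW//; last by apply/implyP => _; rewrite gt_eqF.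
rewrite powRrM powR_mulrn ?powR_ge0// -exprVn -exprMn.
by congr (_ ^+ n); field; rewrite !gt_eqF.
Qed.

End kernel_profile.

Section kernel_bound.
Context {R : realType}.
Variables (phi Psi : R -> R) (K c gamma delta : R).
Hypothesis phi_gt0 : forall t, 0 < t -> 0 < phi t.
Hypothesis Psi_gt0 : forall t, 0 < t -> t <= 1 -> 0 < Psi t.
Hypotheses (K_gt0 : 0 < K) (c_gt0 : 0 < c).
Hypotheses (gamma_gt0 : 0 < gamma) (delta_ge0 : 0 <= delta).
Hypothesis ratio_le : forall s r, 0 < s -> s <= r -> r <= 1 ->
  Psi s / phi s <= K * (Psi r / phi r) * (s / r) `^ gamma.
Hypothesis phi_scale : forall r s, 0 < r -> r <= s ->
  c * (s / r) `^ delta * phi r <= phi s.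

Lemma kernel_near_le (s r : R) : 0 < s -> s <= r -> r <= 1 ->
  Psi s / phi s <= K * (Psi r / phi r) * (s / r) `^ Num.min gamma 1.
Proof.
move=> s_gt0 sr r_le1; have r_gt0 := lt_le_trans s_gt0 sr.
apply: le_trans (ratio_le s_gt0 sr r_le1) _.
apply: ler_wpM2l; first by rewrite mulr_ge0 ?divr_ge0 ?ltW ?Psi_gt0 ?phi_gt0.
by apply: ger_powR; rewrite ?ge_min ?lexx// divr_gt0//= ler_pdivrMr// mul1r.
Qed.

Lemma kernel_far_le (s r : R) : 0 < r -> r <= s -> r <= 1 ->
  Psi r / phi s <= c^-1 * (Psi r / phi r) * (s / r) `^ (- delta).
Proof.
move=> r_gt0 rs r_le1; have s_gt0 := lt_le_trans r_gt0 rs.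
apply: (@le_trans _ _ (Psi r / (c * (s / r) `^ delta * phi r))).
  rewrite ler_pM2l ?Psi_gt0// lef_pV2 ?posrE ?mulr_gt0 ?phi_gt0//.
  - exact: phi_scale.
  - by rewrite powR_gt0 ?divr_gt0.
by rewrite powRN (_ : _ / _ = c^-1 * (Psi r / phi r) * ((s / r) `^ delta)^-1)//;
  field; rewrite !gt_eqF ?phi_gt0 ?powR_gt0 ?divr_gt0.
Qed.

Lemma kernel_le_profile n (s r : R) :
  (0 < n)%N -> 0 < s -> 0 < r -> r <= 1 ->
  Psi (Num.min s r) / (s ^+ n * phi s) <=
  (K + c^-1) * (Psi r / phi r) *
  (r^-1 * kernel_profile (Num.min gamma 1 / n%:R) (delta / n%:R) (s / r)) ^+ n.
Proof.
move=> n_gt0 s_gt0 r_gt0 r_le1; set e := _ / n%:R; set b := _ / n%:R.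
have n_unit : n%:R != 0 :> R by rewrite pnatr_eq0 -lt0n.
have e_ge0 : 0 <= e by rewrite divr_ge0// le_min ler01 (ltW gamma_gt0).
have b_le_e : - b <= e by rewrite (le_trans _ e_ge0)// oppr_le0 divr_ge0.
have u_gt0 : 0 < s / r by rewrite divr_gt0.
have P_ge0 : 0 <= Psi r / phi r by rewrite divr_ge0 ?ltW ?Psi_gt0 ?phi_gt0.
have lhsE x : Psi x / (s ^+ n * phi s) = Psi x / phi s / s ^+ n.
  by rewrite [s ^+ n * _]mulrC invfM mulrA.
rewrite lhsE.
have [sr|/ltW rs] := leP s r.
- have u_le1 : s / r <= 1 by rewrite ler_pdivrMr// mul1r.
  rewrite kernel_profile_le1 ?u_gt0// scaled_powR_exprn// divfK//.
  rewrite (mulrA _ _ (s ^+ n)^-1) ler_pM2r ?invr_gt0 ?exprn_gt0//.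
  apply: le_trans (kernel_near_le s_gt0 sr r_le1) _.
  by rewrite !ler_wpM2r ?powR_ge0// lerDl invr_ge0 ltW.
- have u_ge1 : 1 <= s / r by rewrite ler_pdivlMr// mul1r.
  rewrite kernel_profile_ge1// [-1 - b]addrC scaled_powR_exprn// mulNr divfK//.
  rewrite (mulrA _ _ (s ^+ n)^-1) ler_pM2r ?invr_gt0 ?exprn_gt0//.
  apply: le_trans (kernel_far_le r_gt0 rs r_le1) _.
  by rewrite !ler_wpM2r ?powR_ge0// lerDr ltW.
Qed.

(* At [s = 0] the kernel is [_ / 0 = 0], whatever the value of [Psi 0]. *)
Lemma kernel_ge0 n (s r : R) : (0 < n)%N -> 0 <= s -> 0 < r -> r <= 1 ->
  0 <= Psi (Num.min s r) / (s ^+ n * phi s).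
Proof.
move=> n_gt0; rewrite le_eqVlt => /predU1P[<- _ _|s_gt0 r_gt0 r_le1].
  by rewrite expr0n gtn_eqF// mul0r invr0 mulr0.
rewrite divr_ge0 ?mulr_ge0 ?exprn_ge0 ?ltW ?phi_gt0 ?Psi_gt0//.
  by rewrite lt_min s_gt0.
by rewrite ge_min r_le1 orbT.
Qed.

Lemma kernel_le_dyadic_prod n (t : n.-tuple R) (r : R) :
  (0 < n)%N -> 0 < r -> r <= 1 ->
  ((Psi (Num.min (enorm t) r) / (enorm t ^+ n * phi (enorm t)))%:E <=
   ((K + c^-1) * (Psi r / phi r))%:E *
   \prod_(i < n)
     dyadic_majorant r (Num.min gamma 1 / n%:R)%R (delta / n%:R)%R (tnth t i))%E.
Proof.
move=> n_gt0 r_gt0 r_le1; set e := _ / n%:R; set b := _ / n%:R.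
have e_le1 : e <= 1 by rewrite ler_pdivrMr ?ltr0n// mul1r ge_min ler1n n_gt0 orbT.
have b_ge0 : 0 <= b by rewrite divr_ge0.
have C_ge0 : 0 <= (K + c^-1) * (Psi r / phi r).
  by rewrite mulr_ge0 ?divr_ge0 ?addr_ge0 ?invr_ge0 ?ltW ?Psi_gt0 ?phi_gt0.
have [t0|t_neq0] := eqVneq (enorm t) 0.
  rewrite t0 expr0n gtn_eqF// mul0r invr0 mulr0 mule_ge0 ?lee_fin//.
  by apply: prode_ge0 => i _; exact: dyadic_majorant_ge0.
have t_gt0 : 0 < enorm t by rewrite lt_def t_neq0 sqrtr_ge0.
set w := r^-1 * kernel_profile e b (enorm t / r).
apply: (@le_trans _ _ (((K + c^-1) * (Psi r / phi r))%:E * (w ^+ n)%:E)%E).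
  by rewrite -EFinM lee_fin kernel_le_profile.
apply: lee_wpmul2l; first by rewrite lee_fin.
rewrite (_ : (w ^+ n)%:E = \prod_(i < n) w%:E)%E; last first.
  by rewrite prodEFin prodr_const card_ord.
apply: lee_prod => i _.
  by rewrite lee_fin mulr_ge0 ?invr_ge0 ?(ltW r_gt0)// le_min !powR_ge0.
by apply: dyadic_majorant_ge => //; exact: tnth_le_enorm.
Qed.

End kernel_bound.

Theorem lemma4p2 (R : realType) (d : nat) (phi Psi : R -> R) :
  (0 < d)%N ->
  admissible_order phi ->
  (forall r : R, 0 < r -> r <= 1 -> 0 < Psi r) ->
  (upper_index phi < lower_index Psi)%E ->
  exists C : R, 0 < C /\
    forall r : R, 0 < r -> r <= 1 ->
      (integral_Rd (fun h : d.-tuple R =>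
         (Psi (Num.min (enorm h) r) / (enorm h ^+ d * phi (enorm h)))%:E)
       <= (C * (Psi r / phi r))%:E)%E.
Proof.
move=> d_gt0 phi_adm Psi_gt0 gap.
have phi_gt0 := admissible_order_gt0 phi_adm.
have [al [be [al_lt_be [phi_dec Psi_inc]]]] := upper_lower_index_gap gap.
have [K [K_gt0 ratio_le]] :=
  index_gap_ratio (fun t t_gt0 _ => phi_gt0 t t_gt0) Psi_gt0 phi_dec Psi_inc.
have [c [delta [c_gt0 [delta_gt0 phi_scale]]]] :=
  admissible_order_lower_scaling phi_adm.
have gamma_gt0 : 0 < be - al by rewrite subr_gt0.
set e := Num.min (be - al) 1 / d%:R; set b := delta / d%:R.
have e_gt0 : 0 < e by rewrite divr_gt0 ?ltr0n// lt_min gamma_gt0 ltr01.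
have b_gt0 : 0 < b by rewrite divr_gt0 ?ltr0n.
have [J J_gt0 int_majorant] := integral_dyadic_majorant e_gt0 b_gt0.
exists ((K + c^-1) * J ^+ d); split.
  by rewrite mulr_gt0 ?exprn_gt0 ?addr_gt0 ?invr_gt0.
move=> r r_gt0 r_le1; rewrite mulrAC EFinM.
apply: (le_trans _ (integral_Rd_prod_le (@dyadic_majorant_ge0 _ r e b r_gt0)
  (@measurable_dyadic_majorant _ r e b r_gt0) _ d _)).
- apply: ge0_le_integral_Rd => t.
    by rewrite lee_fin kernel_ge0 ?sqrtr_ge0.
  exact: (kernel_le_dyadic_prod phi_gt0 Psi_gt0 K_gt0 c_gt0 gamma_gt0
    (ltW delta_gt0) ratio_le phi_scale t d_gt0 r_gt0 r_le1).
- by rewrite int_majorant.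
- by rewrite lee_fin mulr_ge0 ?divr_ge0 ?addr_ge0 ?invr_ge0 ?ltW
    ?Psi_gt0 ?phi_gt0.
Qed.
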